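(* Let $n,m,p,N$ be positive integers, $A\in\mathbb{R}^{n\times n}$, $B\in\mathbb{R}^{n\times m}$, $C\in\mathbb{R}^{p\times n}$, $D\in\mathbb{R}^{p\times p}$ with $DD^T\succ 0$, and let $\mathcal{O}_N,\mathcal{O}_N^R,\mathcal{R}_N,\mathcal{D}_N,\mathcal{H}_N,\mathcal{L}_N,M_N,\tilde\phi_N,S_\Phi^{-1},\mathcal{Q}_\Phi,\Omega_\Phi,W_\Phi$ be as defined in the context. Let $\Phi_1,\Phi_2$ be symmetric $Nn\times Nn$ matrices with $0\preceq \Phi_2\preceq \Phi_1\prec \tilde\phi_N I_{Nn}$. Then $$\Omega_{\Phi_1}\preceq \Omega_{\Phi_2}\qquad\text{and}\qquad W_{\Phi_1}\succeq W_{\Phi_2}.$$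
   Context: $\preceq,\prec$ denote the Loewner order on symmetric matrices; $\lambda_1(\cdot)$ is the largest eigenvalue; $\otimes$ is the Kronecker product. Define the block matrices $\mathcal{R}_N=[\,B\ \ AB\ \cdots\ A^{N-1}B\,]\in\mathbb{R}^{n\times Nm}$, $\mathcal{O}_N=[\,(CA^{N-1})^T\ \cdots\ (CA)^T\ \ C^T\,]^T\in\mathbb{R}^{Np\times n}$, $\mathcal{O}_N^R=[\,(A^{N-1})^T\ \cdots\ A^T\ \ I_n\,]^T\in\mathbb{R}^{Nn\times n}$, $\mathcal{D}_N=I_N\otimes D$. With $H_t=CA^{t-1}B$ and $L_t=A^{t-1}B$ for $t\ge 1$, let $\mathcal{H}_N$ (size $Np\times Nm$) and $\mathcal{L}_N$ (size $Nn\times Nm$) be the block upper-triangular Toeplitz matrices whose $(i,j)$ block ($i,j=1,\dots,N$) is $H_{j-i}$, resp. $L_{j-i}$, for $j>i$ and $0$ for $j\le i$. Let $M_N=\mathcal{L}_N(I_{Nm}+\mathcal{H}_N^T(\mathcal{D}_N\mathcal{D}_N^T)^{-1}\mathcal{H}_N)^{-1}\mathcal{L}_N^T$ and $\tilde\phi_N=1/\lambda_1(M_N)$ (interpreted as $+\infty$ if $M_N=0$). For a symmetric $\Phi$ with $0\preceq\Phi\prec\tilde\phi_N I_{Nn}$ define $S_\Phi=-\Phi^{-1}+M_N$ (for invertible $\Phi$) and its inverse $S_\Phi^{-1}=-\Phi(I_{Nn}-M_N\Phi)^{-1}$ (this formula is used for all such $\Phi$, so that $S_0^{-1}=0$); $\mathcal{Q}_\Phi=[\,I_{Nm}+\mathcal{H}_N^T(\mathcal{D}_N\mathcal{D}_N^T)^{-1}\mathcal{H}_N-\mathcal{L}_N^T\Phi\mathcal{L}_N\,]^{-1}$;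 $\mathcal{J}_N=\mathcal{O}_N^R-\mathcal{L}_N\mathcal{H}_N^T[\mathcal{D}_N\mathcal{D}_N^T+\mathcal{H}_N\mathcal{H}_N^T]^{-1}\mathcal{O}_N$; $\Omega_N=\mathcal{O}_N^T(\mathcal{D}_N\mathcal{D}_N^T+\mathcal{H}_N\mathcal{H}_N^T)^{-1}\mathcal{O}_N$; $\Omega_\Phi=\Omega_N+\mathcal{J}_N^TS_\Phi^{-1}\mathcal{J}_N$ and $W_\Phi=\mathcal{R}_N\mathcal{Q}_\Phi\mathcal{R}_N^T$. *)

From HB Require Import structures.
From mathcomp Require Import all_boot all_order all_algebra.
From mathcomp Require Import boolp classical_sets reals constructive_ereal.
Set Implicit Arguments. Unset Strict Implicit. Unset Printing Implicit Defensive.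
Import Order.TTheory GRing.Theory Num.Theory.
Local Open Scope ring_scope.

Section Defs.
Variable R : realType.

Definition psdmx k (X : 'M[R]_k) : Prop :=
  X^T = X /\ forall x : 'cV[R]_k, 0 <= (x^T *m X *m x) 0 0.
Definition pdmx k (X : 'M[R]_k) : Prop :=
  X^T = X /\ forall x : 'cV[R]_k, x != 0 -> 0 < (x^T *m X *m x) 0 0.
Definition loewner_le k (Y X : 'M[R]_k) : Prop := psdmx (X - Y).
Definition loewner_lt k (Y X : 'M[R]_k) : Prop := pdmx (X - Y).

Definition lambda1 k (X : 'M[R]_k) : R := sup [set a : R | eigenvalue X a].

Definition loewner_lt_bar k (Y : 'M[R]_k) (phi : \bar R) : Prop :=
  match phi with
  | r%:E => loewner_lt Y r%:M
  | +oo%E => True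
  | -oo%E => False
  end.

Lemma blk_lt N q (k : 'I_(N * q)) : (k %/ q < N)%N.
Proof.
case: q k => [|q] k; first by case: k => i; rewrite muln0.
by rewrite ltn_divLR // ltn_ord.
Qed.
Lemma inblk_lt N q (k : 'I_(N * q)) : (k %% q < q)%N.
Proof.
case: q k => [|q] k; first by case: k => i; rewrite muln0.
by rewrite ltn_mod.
Qed.
Definition blkI N q (k : 'I_(N * q)) : 'I_N := Ordinal (blk_lt k).
Definition inI N q (k : 'I_(N * q)) : 'I_q := Ordinal (inblk_lt k).

Definition blockmx N a b (F : 'I_N -> 'I_N -> 'M[R]_(a, b)) : 'M[R]_(N * a, N * b) :=
  \matrix_(k, l) F (blkI k) (blkI l) (inI k) (inI l).
Definition blockrow N a b (F : 'I_N -> 'M[R]_(a, b)) : 'M[R]_(a, N * b) :=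
  \matrix_(k, l) F (blkI l) k (inI l).
Definition blockcol N a b (F : 'I_N -> 'M[R]_(a, b)) : 'M[R]_(N * a, b) :=
  \matrix_(k, l) F (blkI k) (inI k) l.

Variables (n m p N : nat).
Variables (A : 'M[R]_n) (B : 'M[R]_(n, m)) (C : 'M[R]_(p, n)) (D : 'M[R]_p).

Definition RN : 'M[R]_(n, N * m) := blockrow (fun j : 'I_N => A ^+ j *m B).
Definition ON : 'M[R]_(N * p, n) :=
  blockcol (fun i : 'I_N => C *m A ^+ (N.-1 - i)).
Definition ONR : 'M[R]_(N * n, n) := blockcol (fun i : 'I_N => A ^+ (N.-1 - i)).
Definition DN : 'M[R]_(N * p, N * p) :=
  blockmx (fun i j : 'I_N => if i == j then D else 0).
Definition HN : 'M[R]_(N * p, N * m) :=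
  blockmx (fun i j : 'I_N => if (i < j)%N then C *m A ^+ (j - i).-1 *m B else 0).
Definition LN : 'M[R]_(N * n, N * m) :=
  blockmx (fun i j : 'I_N => if (i < j)%N then A ^+ (j - i).-1 *m B else 0).

Definition DDinv : 'M[R]_(N * p) := invmx (DN *m DN^T).
Definition PN : 'M[R]_(N * m) := 1%:M + HN^T *m DDinv *m HN.
Definition MN : 'M[R]_(N * n) := LN *m invmx PN *m LN^T.
Definition phitN : \bar R :=
  if MN == 0 then +oo%E else ((lambda1 MN)^-1)%:E.

Definition SinvPhi (Phi : 'M[R]_(N * n)) : 'M[R]_(N * n) :=
  - (Phi *m invmx (1%:M - MN *m Phi)).
Definition QPhi (Phi : 'M[R]_(N * n)) : 'M[R]_(N * m) :=
  invmx (PN - LN^T *m Phi *m LN).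
Definition GN : 'M[R]_(N * p) := invmx (DN *m DN^T + HN *m HN^T).
Definition JN : 'M[R]_(N * n, n) := ONR - LN *m HN^T *m GN *m ON.
Definition OmegaN : 'M[R]_n := ON^T *m GN *m ON.
Definition OmegaPhi (Phi : 'M[R]_(N * n)) : 'M[R]_n :=
  OmegaN + JN^T *m SinvPhi Phi *m JN.
Definition WPhi (Phi : 'M[R]_(N * n)) : 'M[R]_n := RN *m QPhi Phi *m RN^T.

End Defs.

From HB Require Import structures.
From mathcomp Require Import all_boot all_order all_algebra.
From mathcomp Require Import classical_sets reals constructive_ereal.
From mathcomp Require Import lra.
Set Implicit Arguments. Unset Strict Implicit. Unset Printing Implicit Defensive.
Import Order.TTheory GRing.Theory Num.Theory.
Local Open Scope ring_scope.

(* Write P = I + H_N^T (D_N D_N^T)^{-1} H_N and K_Phi = P - L_N^T Phi L_N, so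
   that Q_Phi = K_Phi^{-1} and, by the Woodbury identity,
   -S_Phi^{-1} = Phi + Phi L_N K_Phi^{-1} L_N^T Phi.  Since L_N P^{-1} L_N^T
   = M_N <= lambda_1(M_N) I, the bound Phi_1 < lambda_1(M_N)^{-1} I makes
   K_{Phi_1} positive definite, and so is every K_Phi with Phi <= Phi_1.
   Everything then follows from the variational formula
     z^T K^{-1} z = max_y (2 y^T z - y^T K y)      (K > 0):
   it shows that K |-> K^{-1} is antitone, whence Q_{Phi_2} <= Q_{Phi_1}, and
   it gives x^T (-S_Phi^{-1}) x = max_y ((x + L_N y)^T Phi (x + L_N y) - y^T P y),
   which is monotone in Phi.  Congruence by R_N^T and J_N preserves the order. *)

Section BilinearForm.
Variable R : realType.

Definition bform a c (X : 'M[R]_(a, c)) (x : 'cV[R]_a) (y : 'cV[R]_c) : R :=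
  (x^T *m X *m y) 0 0.

Lemma bformDl a c (X : 'M[R]_(a, c)) x1 x2 y :
  bform X (x1 + x2) y = bform X x1 y + bform X x2 y.
Proof. by rewrite /bform linearD !mulmxDl mxE. Qed.

Lemma bformDr a c (X : 'M[R]_(a, c)) x y1 y2 :
  bform X x (y1 + y2) = bform X x y1 + bform X x y2.
Proof. by rewrite /bform mulmxDr mxE. Qed.

Lemma bformBl a c (X : 'M[R]_(a, c)) x1 x2 y :
  bform X (x1 - x2) y = bform X x1 y - bform X x2 y.
Proof. by rewrite /bform linearB !mulmxBl !mxE. Qed.

Lemma bformBr a c (X : 'M[R]_(a, c)) x y1 y2 :
  bform X x (y1 - y2) = bform X x y1 - bform X x y2.
Proof. by rewrite /bform mulmxBr !mxE. Qed.

Lemma bformDm a c (X Y : 'M[R]_(a, c)) x y :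
  bform (X + Y) x y = bform X x y + bform Y x y.
Proof. by rewrite /bform mulmxDr mulmxDl mxE. Qed.

Lemma bformBm a c (X Y : 'M[R]_(a, c)) x y :
  bform (X - Y) x y = bform X x y - bform Y x y.
Proof. by rewrite /bform mulmxBr mulmxBl !mxE. Qed.

Lemma bformZl a c (X : 'M[R]_(a, c)) t x y :
  bform X (t *: x) y = t * bform X x y.
Proof. by rewrite /bform linearZ -!scalemxAl mxE. Qed.

Lemma bformZr a c (X : 'M[R]_(a, c)) t x y :
  bform X x (t *: y) = t * bform X x y.
Proof. by rewrite /bform -scalemxAr mxE. Qed.

Lemma bform0l a c (X : 'M[R]_(a, c)) y : bform X 0 y = 0.
Proof. by rewrite /bform trmx0 !mul0mx mxE. Qed.

Lemma bform0m a c (x : 'cV[R]_a) (y : 'cV[R]_c) : bform 0 x y = 0.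
Proof. by rewrite /bform mulmx0 mul0mx mxE. Qed.

Lemma bform_mull a b c (A : 'M[R]_(a, b)) (X : 'M[R]_(a, c)) x y :
  bform X (A *m x) y = bform (A^T *m X) x y.
Proof. by rewrite /bform trmx_mul !mulmxA. Qed.

Lemma bform_mulr a b c (A : 'M[R]_(c, b)) (X : 'M[R]_(a, c)) x y :
  bform X x (A *m y) = bform (X *m A) x y.
Proof. by rewrite /bform !mulmxA. Qed.

Lemma bform_congr a c (A : 'M[R]_(a, c)) (X : 'M[R]_a) x y :
  bform (A^T *m X *m A) x y = bform X (A *m x) (A *m y).
Proof. by rewrite bform_mull bform_mulr. Qed.

Lemma bform_tr a c (X : 'M[R]_(a, c)) x y : bform X x y = bform X^T y x.
Proof.
have tr11 (M : 'M[R]_1) : M 0 0 = M^T 0 0 by rewrite mxE.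
by rewrite /bform tr11 !trmx_mul trmxK mulmxA.
Qed.

Lemma bform_sym a (X : 'M[R]_a) x y : X^T = X -> bform X x y = bform X y x.
Proof. by move=> sX; rewrite bform_tr sX. Qed.

Lemma bform_scalar a (t : R) (x y : 'cV[R]_a) :
  bform t%:M x y = t * bform 1%:M x y.
Proof. by rewrite /bform mul_mx_scalar mulmx1 -scalemxAl mxE. Qed.

Lemma bform1 a (x : 'cV[R]_a) : bform 1%:M x x = \sum_i x i 0 ^+ 2.
Proof. by rewrite /bform mulmx1 mxE; apply: eq_bigr => i _; rewrite mxE expr2. Qed.

Lemma sqr_le_bform1 a (x : 'cV[R]_a) i : x i 0 ^+ 2 <= bform 1%:M x x.
Proof. by rewrite bform1 (bigD1 i) //= lerDl sumr_ge0 // => j _; rewrite sqr_ge0. Qed.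

Lemma bform1_ge0 a (x : 'cV[R]_a) : 0 <= bform 1%:M x x.
Proof. by rewrite bform1 sumr_ge0 // => i _; rewrite sqr_ge0. Qed.

Lemma bform1_gt0 a (x : 'cV[R]_a) : x != 0 -> 0 < bform 1%:M x x.
Proof.
move=> nz_x; rewrite lt_neqAle bform1_ge0 andbT eq_sym; apply: contra nz_x => /eqP x0.
apply/eqP/matrixP => i j; rewrite (ord1 j) mxE; apply/eqP.
by rewrite -sqrf_eq0 eq_le sqr_ge0 andbT -x0 sqr_le_bform1.
Qed.

Lemma bform_le_sum_abs a (X : 'M[R]_a) x :
  bform X x x <= (\sum_j \sum_i `|X i j|) * bform 1%:M x x.
Proof.
rewrite {1}/bform mxE mulr_suml; apply: ler_sum => j _.
rewrite mxE !mulr_suml; apply: ler_sum => i _; rewrite mxE.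
have xij : `|x i 0| * `|x j 0| <= bform 1%:M x x.
  have := sqr_le_bform1 x i; have := sqr_le_bform1 x j.
  rewrite -(real_normK (num_real (x i 0))) -(real_normK (num_real (x j 0))).
  have : 0 <= (`|x i 0| - `|x j 0|) ^+ 2 by rewrite sqr_ge0.
  nra.
apply: le_trans (ler_norm _) _.
by rewrite !normrM mulrAC mulrC ler_wpM2l.
Qed.

End BilinearForm.

Section Loewner.
Variable R : realType.

Lemma pdmx_psdmx k (X : 'M[R]_k) : pdmx X -> psdmx X.
Proof.
case=> sX X_gt0; split=> // v.
by have [->|/X_gt0/ltW] := eqVneq v 0; first by rewrite trmx0 !mul0mx mxE.
Qed.

Lemma trmx_congr a c (A : 'M[R]_(a, c)) (X : 'M[R]_a) :
  X^T = X -> (A^T *m X *m A)^T = A^T *m X *m A.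
Proof. by move=> sX; rewrite !trmx_mul trmxK sX mulmxA. Qed.

Lemma psdmx_congr a c (A : 'M[R]_(a, c)) (X : 'M[R]_a) :
  psdmx X -> psdmx (A^T *m X *m A).
Proof.
case=> sX X_ge0; split=> [|v]; first exact: trmx_congr.
change (0 <= bform (A^T *m X *m A) v v); rewrite bform_congr; exact: X_ge0.
Qed.

Lemma psdmx_gram a c (X : 'M[R]_(a, c)) : psdmx (X *m X^T).
Proof.
split=> [|v]; first by rewrite trmx_mul trmxK.
change (0 <= bform (X *m X^T) v v).
have -> : X *m X^T = X^T^T *m 1%:M *m X^T by rewrite trmxK mulmx1.
by rewrite bform_congr bform1_ge0.
Qed.

Lemma loewner_le_trans k (X Y Z : 'M[R]_k) :
  loewner_le X Y -> loewner_le Y Z -> loewner_le X Z.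
Proof.
case=> sYX YX_ge0 [sZY ZY_ge0]; have eZX : Z - X = (Z - Y) + (Y - X).
  by rewrite addrA subrK.
split=> [|v]; first by rewrite eZX linearD /= sYX sZY.
change (0 <= bform (Z - X) v v); rewrite eZX bformDm.
exact: addr_ge0 (ZY_ge0 v) (YX_ge0 v).
Qed.

Lemma pdmx_unit k (X : 'M[R]_k) : pdmx X -> X \in unitmx.
Proof.
case=> _ X_gt0; rewrite unitmxE unitfE; apply/negP => /det0P [v nz_v vX0].
have := X_gt0 v^T; rewrite trmx_eq0 trmxK vX0 mul0mx mxE ltxx.
by move=> /(_ nz_v).
Qed.

Lemma pdmx_le k (Y X : 'M[R]_k) : pdmx Y -> loewner_le Y X -> pdmx X.
Proof.
case=> sY Y_gt0 [sXY XY_ge0]; split.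
  by rewrite -(subrK Y^T X^T) -linearB /= sXY sY subrK.
move=> v nz_v; change (0 < bform X v v).
have : 0 < bform Y v v := Y_gt0 v nz_v.
have : 0 <= bform (X - Y) v v := XY_ge0 v.
rewrite bformBm; lra.
Qed.

Lemma bform_invmx k (X : 'M[R]_k) z : X^T = X -> X \in unitmx ->
  bform X (invmx X *m z) (invmx X *m z) = bform (invmx X) z z.
Proof. by move=> sX uX; rewrite -bform_congr trmx_inv sX mulVmx // mul1mx. Qed.

Lemma psdmx_inv k (X : 'M[R]_k) : psdmx X -> psdmx (invmx X).
Proof.
case=> sX X_ge0; split=> [|z]; first by rewrite trmx_inv sX.
have [uX|uX] := boolP (X \in unitmx); last by rewrite invmx_out ?inE.
change (0 <= bform (invmx X) z z); rewrite -bform_invmx //; exact: X_ge0.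
Qed.

Lemma bform_invmx_ge k (X : 'M[R]_k) y z : psdmx X -> X \in unitmx ->
  2 * bform 1%:M y z - bform X y y <= bform (invmx X) z z.
Proof.
case=> sX X_ge0 uX.
have : 0 <= bform X (y - invmx X *m z) (y - invmx X *m z) := X_ge0 _.
rewrite !bformBl !bformBr (bform_sym (invmx X *m z) y sX) bform_invmx //.
rewrite bform_mulr mulmxV //; lra.
Qed.

Lemma bform_invmx_eq k (X : 'M[R]_k) z : X^T = X -> X \in unitmx ->
  bform (invmx X) z z =
  2 * bform 1%:M (invmx X *m z) z - bform X (invmx X *m z) (invmx X *m z).
Proof. by move=> sX uX; rewrite bform_invmx // bform_mull mulmx1 trmx_inv sX; lra. Qed.

Lemma loewner_le_invmx k (Y X : 'M[R]_k) : pdmx Y -> loewner_le Y X ->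
  loewner_le (invmx X) (invmx Y).
Proof.
move=> Y_pd YX; have X_pd := pdmx_le Y_pd YX.
have [[sX _] [sY _]] := (X_pd, Y_pd).
split=> [|z]; first by rewrite linearB /= !trmx_inv sX sY.
change (0 <= bform (invmx Y - invmx X) z z).
rewrite bformBm (bform_invmx_eq z sX (pdmx_unit X_pd)); set y := invmx X *m z.
have := bform_invmx_ge y z (pdmx_psdmx Y_pd) (pdmx_unit Y_pd).
have : 0 <= bform (X - Y) y y := proj2 YX y.
rewrite bformBm; lra.
Qed.

Lemma pdmx_1_add_congr a c (H : 'M[R]_(a, c)) (G : 'M[R]_a) :
  psdmx G -> pdmx (1%:M + H^T *m G *m H).
Proof.
move=> G_psd; have [sG G_ge0] := psdmx_congr H G_psd.
split=> [|v nz_v]; first by rewrite linearD /= trmx1 sG.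
change (0 < bform (1%:M + H^T *m G *m H) v v); rewrite bformDm.
exact: ltr_wpDr (G_ge0 v) (bform1_gt0 nz_v).
Qed.

End Loewner.

Section Rayleigh.
Variable R : realType.

Lemma exists_cV_neq0 k : (0 < k)%N -> exists x : 'cV[R]_k, x != 0.
Proof.
move=> k_gt0; exists (const_mx 1); apply/negP => /eqP/matrixP/(_ (Ordinal k_gt0) 0).
by rewrite !mxE => /eqP; rewrite oner_eq0.
Qed.

(* T^{-1} <= c I for a crude c, and the variational formula for T^{-1}
   at y = c^{-1} x turns this into c^{-1} I <= T. *)
Lemma psdmx_unit_coercive k (T : 'M[R]_k) : psdmx T -> T \in unitmx ->
  exists2 t, 0 < t & forall x, t * bform 1%:M x x <= bform T x x.
Proof.
move=> T_psd uT; have Ti_psd := psdmx_inv T_psd.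
pose c : R := \sum_j \sum_i `|invmx T i j| + 1.
have c_gt0 : 0 < c by rewrite ltr_pwDr // sumr_ge0 // => j _; rewrite sumr_ge0.
exists c^-1 => [|x]; first by rewrite invr_gt0.
have := bform_invmx_ge (c^-1 *: x) x Ti_psd; rewrite unitmx_inv invmxK => /(_ uT).
rewrite bformZl bformZr bformZl.
have Ti_le : bform (invmx T) x x <= c * bform 1%:M x x.
  have := bform_le_sum_abs (invmx T) x; have := bform1_ge0 x; rewrite /c; nra.
have : c^-1 * (c^-1 * bform (invmx T) x x) <= c^-1 * bform 1%:M x x.
  by apply: ler_wpM2l; rewrite ?invr_ge0 ?(ltW c_gt0) // ler_pdivrMl.
lra.
Qed.

Lemma not_eigenvalue_bound k (M : 'M[R]_k) s : M^T = M ->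
  (forall x, bform M x x <= s * bform 1%:M x x) -> ~~ eigenvalue M s ->
  exists2 t, 0 < t & forall x, bform M x x <= (s - t) * bform 1%:M x x.
Proof.
move=> sM M_le s_noteig.
have T_psd : psdmx (s%:M - M).
  split=> [|x]; first by rewrite linearB /= tr_scalar_mx sM.
  change (0 <= bform (s%:M - M) x x); rewrite bformBm (bform_scalar s) subr_ge0.
  exact: M_le.
have uT : s%:M - M \in unitmx.
  rewrite unitmxE unitfE; apply: contra s_noteig => /det0P [v nz_v vT0].
  apply/eigenvalueP; exists v => //.
  by move/eqP: vT0; rewrite mulmxBr subr_eq0 mul_mx_scalar eq_sym => /eqP.
have [t t_gt0 tT] := psdmx_unit_coercive T_psd uT.
by exists t => // x; have := tT x; rewrite bformBm (bform_scalar s) mulrBl; lra.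
Qed.

Lemma eigenvalue_le_bound k (M : 'M[R]_k) s a : eigenvalue M a ->
  (forall x, bform M x x <= s * bform 1%:M x x) -> a <= s.
Proof.
move=> /eigenvalueP [v vM nz_v] M_le.
have nz_vT : v^T != 0 by rewrite trmx_eq0.
have vMv : bform M v^T v^T = a * bform 1%:M v^T v^T.
  by rewrite /bform trmxK vM mulmx1 -scalemxAl mxE.
by rewrite -(ler_pM2r (bform1_gt0 nz_vT)) -vMv M_le.
Qed.

(* The supremum of the Rayleigh quotient is an eigenvalue: were it not,
   [not_eigenvalue_bound] would lower it. *)
Lemma bform_le_lambda1 k (M : 'M[R]_k) x : (0 < k)%N -> M^T = M ->
  bform M x x <= lambda1 M * bform 1%:M x x.
Proof.
move=> k_gt0 sM.
pose Q := [set r : R | exists2 y, y != 0 & r = bform M y y / bform 1%:M y y]%classic.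
have Q_sup : has_sup Q.
  have [u nz_u] := exists_cV_neq0 k_gt0.
  split; first by exists (bform M u u / bform 1%:M u u), u.
  exists (\sum_j \sum_i `|M i j|) => _ [y nz_y ->].
  by rewrite ler_pdivrMr ?bform1_gt0 // bform_le_sum_abs.
have M_le_S y : bform M y y <= sup Q * bform 1%:M y y.
  have [->|nz_y] := eqVneq y 0; first by rewrite !bform0l mulr0.
  by rewrite -ler_pdivrMr ?bform1_gt0 //; apply: sup_upper_bound => //; exists y.
have S_eig : eigenvalue M (sup Q).
  apply: contraT => /(not_eigenvalue_bound sM M_le_S) [t t_gt0 M_le].
  suff : sup Q <= sup Q - t by lra.
  apply: ge_sup; first by case: Q_sup.
  by move=> _ [y nz_y ->]; rewrite ler_pdivrMr ?bform1_gt0.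
have E_sup : has_sup [set a | eigenvalue M a]%classic.
  by split; [exists (sup Q) | exists (sup Q) => a /eigenvalue_le_bound; apply].
apply: le_trans (M_le_S x) _; apply: ler_wpM2r; first exact: bform1_ge0.
exact: sup_upper_bound.
Qed.

Lemma loewner_lt_bar_inv_lambda1 k (M Phi : 'M[R]_k) : (0 < k)%N -> M^T = M ->
  psdmx Phi -> loewner_lt_bar Phi (if M == 0 then +oo%E else ((lambda1 M)^-1)%:E) ->
  exists lam, [/\ 0 <= lam, forall w, bform M w w <= lam * bform 1%:M w w
    & forall w, w != 0 -> lam * bform Phi w w < bform 1%:M w w].
Proof.
move=> k_gt0 sM Phi_psd; case: eqP => [-> _|_ /= [_ Phi_lt]].
  by exists 0; split=> // [w|w /bform1_gt0]; rewrite mul0r ?bform0m.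
have Phi_lt' w : w != 0 -> bform Phi w w < (lambda1 M)^-1 * bform 1%:M w w.
  move=> nz_w; have : 0 < bform ((lambda1 M)^-1%:M - Phi) w w := Phi_lt w nz_w.
  by rewrite bformBm (bform_scalar (lambda1 M)^-1) subr_gt0.
have lam_gt0 : 0 < lambda1 M.
  have [u nz_u] := exists_cV_neq0 k_gt0.
  have := Phi_lt' u nz_u; have : 0 <= bform Phi u u := proj2 Phi_psd u.
  rewrite -invr_gt0 -(pmulr_lgt0 _ (bform1_gt0 nz_u)); lra.
exists (lambda1 M); split=> [|w|w nz_w]; [exact: ltW | exact: bform_le_lambda1 |].
have h := Phi_lt' w nz_w.
by rewrite -(ltr_pM2l lam_gt0) mulrA mulfV ?gt_eqF // mul1r in h.
Qed.

End Rayleigh.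

Section SchurComplement.
Variables (R : realType) (a b : nat) (L : 'M[R]_(a, b)) (P : 'M[R]_b).

(* With L = L_N and P = P_N, [invmx (schur_gap Phi)] is Q_Phi and
   [resolvent Phi] is -S_Phi^{-1}. *)
Definition schur_gap (Phi : 'M[R]_a) : 'M[R]_b := P - L^T *m Phi *m L.

Definition resolvent (Phi : 'M[R]_a) : 'M[R]_a :=
  Phi *m invmx (1%:M - L *m invmx P *m L^T *m Phi).

Lemma schur_gap_le Phi1 Phi2 :
  loewner_le Phi2 Phi1 -> loewner_le (schur_gap Phi1) (schur_gap Phi2).
Proof.
rewrite /loewner_le.
have -> : schur_gap Phi2 - schur_gap Phi1 = L^T *m (Phi1 - Phi2) *m L.
  by rewrite /schur_gap mulmxBr mulmxBl opprB addrC addrA subrK.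
exact: psdmx_congr.
Qed.

Hypothesis P_pd : pdmx P.
Let sP : P^T = P := proj1 P_pd.
Let uP : P \in unitmx := pdmx_unit P_pd.

Lemma schur_gap_sym Phi : Phi^T = Phi -> (schur_gap Phi)^T = schur_gap Phi.
Proof. by move=> sPhi; rewrite linearB /= sP trmx_congr. Qed.

Lemma bform1_mul_le lam x : 0 <= lam ->
  (forall w, bform (L *m invmx P *m L^T) w w <= lam * bform 1%:M w w) ->
  bform 1%:M (L *m x) (L *m x) <= lam * bform P x x.
Proof.
move=> lam_ge0 M_le.
have [->|nz_x] := eqVneq x 0; first by rewrite mulmx0 !bform0l mulr0.
have alpha_gt0 : 0 < bform P x x := proj2 P_pd x nz_x.
set beta := bform 1%:M (L *m x) (L *m x).
have beta_ge0 : 0 <= beta := bform1_ge0 _.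
(* the variational formula for P^{-1} at the optimal multiple y = t x *)
pose t := beta / bform P x x.
have t_alpha : t * bform P x x = beta by rewrite mulfVK ?gt_eqF.
have := bform_invmx_ge (t *: x) (L^T *m (L *m x)) (pdmx_psdmx P_pd) uP.
have -> : bform 1%:M (t *: x) (L^T *m (L *m x)) = t * beta.
  by rewrite bformZl bform_mulr mul1mx /beta bform_mull mulmx1.
rewrite -bform_congr trmxK bformZl bformZr t_alpha.
have := M_le (L *m x); rewrite -/beta => M_le_beta tbeta.
have [->|nz_beta] := eqVneq beta 0; first by rewrite mulr_ge0 ?(ltW alpha_gt0).
have beta_gt0 : 0 < beta by rewrite lt_neqAle eq_sym nz_beta.
rewrite -t_alpha; apply: ler_wpM2r; first exact: ltW.
by rewrite -(ler_pM2r beta_gt0); lra.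
Qed.

Lemma pdmx_schur_gap lam Phi : Phi^T = Phi -> 0 <= lam ->
  (forall w, bform (L *m invmx P *m L^T) w w <= lam * bform 1%:M w w) ->
  (forall w, w != 0 -> lam * bform Phi w w < bform 1%:M w w) ->
  pdmx (schur_gap Phi).
Proof.
move=> sPhi lam_ge0 M_le Phi_lt.
split=> [|v nz_v]; first exact: schur_gap_sym.
change (0 < bform (schur_gap Phi) v v); rewrite bformBm bform_congr.
have P_gt0 : 0 < bform P v v := proj2 P_pd v nz_v.
have [->|nz_w] := eqVneq (L *m v) 0; first by rewrite bform0l subr0.
have := Phi_lt _ nz_w; have := bform1_mul_le v lam_ge0 M_le.
nra.
Qed.

Lemma resolventE Phi : Phi^T = Phi -> schur_gap Phi \in unitmx ->
  resolvent Phi = Phi + (L^T *m Phi)^T *m invmx (schur_gap Phi) *m (L^T *m Phi).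
Proof.
move=> sPhi uK; set K := schur_gap Phi; set U := L^T *m Phi.
have UL : U *m L = P - K by rewrite /K /schur_gap opprB addrC subrK.
have XY : L *m invmx P *m U *m (L *m invmx K *m U) =
          L *m invmx K *m U - L *m invmx P *m U.
  have -> : L *m invmx P *m U *m (L *m invmx K *m U) =
            L *m (invmx P *m (U *m L) *m invmx K) *m U by rewrite !mulmxA.
  by rewrite UL mulmxBr mulVmx // mulmxBl mul1mx mulmxK // mulmxBr mulmxBl.
have inv : (1%:M - L *m invmx P *m U) *m (1%:M + L *m invmx K *m U) = 1%:M.
  rewrite mulmxDr mulmx1 mulmxBl mul1mx XY.
  by rewrite opprB addrACA addKr addrK.
have [u_inv _] := mulmx1_unit inv.
rewrite /resolvent -[L *m invmx P *m L^T *m Phi]mulmxA -/U.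
have -> : invmx (1%:M - L *m invmx P *m U) = 1%:M + L *m invmx K *m U.
  by rewrite -[RHS](mulKmx u_inv) inv mulmx1.
by rewrite mulmxDr mulmx1 trmx_mul sPhi trmxK !mulmxA.
Qed.

Lemma resolvent_sym Phi : Phi^T = Phi -> schur_gap Phi \in unitmx ->
  (resolvent Phi)^T = resolvent Phi.
Proof.
move=> sPhi uK; rewrite resolventE // linearD /= sPhi trmx_congr //.
by rewrite trmx_inv schur_gap_sym.
Qed.

Lemma bform_shift Phi x y : Phi^T = Phi ->
  bform Phi x x + 2 * bform 1%:M y (L^T *m Phi *m x) - bform (schur_gap Phi) y y =
  bform Phi (x + L *m y) (x + L *m y) - bform P y y.
Proof.
move=> sPhi; rewrite bform_mulr mul1mx -bform_mull bformBm bform_congr.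
rewrite !bformDl !bformDr (bform_sym x (L *m y) sPhi); lra.
Qed.

Lemma resolvent_bform_ge Phi x y : Phi^T = Phi -> pdmx (schur_gap Phi) ->
  bform Phi (x + L *m y) (x + L *m y) - bform P y y <= bform (resolvent Phi) x x.
Proof.
move=> sPhi K_pd; rewrite resolventE ?pdmx_unit // bformDm bform_congr.
rewrite -bform_shift //.
have := bform_invmx_ge y (L^T *m Phi *m x) (pdmx_psdmx K_pd) (pdmx_unit K_pd).
lra.
Qed.

Lemma resolvent_bform_eq Phi x : Phi^T = Phi -> pdmx (schur_gap Phi) ->
  let y := invmx (schur_gap Phi) *m (L^T *m Phi *m x) in
  bform (resolvent Phi) x x = bform Phi (x + L *m y) (x + L *m y) - bform P y y.
Proof.
move=> sPhi K_pd y; have [sK uK] := (proj1 K_pd, pdmx_unit K_pd).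
rewrite resolventE // bformDm bform_congr -bform_shift //.
rewrite (bform_invmx_eq _ sK uK); lra.
Qed.

Lemma resolvent_le Phi1 Phi2 : Phi1^T = Phi1 -> Phi2^T = Phi2 ->
  loewner_le Phi2 Phi1 -> pdmx (schur_gap Phi1) ->
  loewner_le (resolvent Phi2) (resolvent Phi1).
Proof.
move=> sPhi1 sPhi2 Phi21 K1_pd; have K2_pd := pdmx_le K1_pd (schur_gap_le Phi21).
split=> [|x]; first by rewrite linearB /= !resolvent_sym ?pdmx_unit.
change (0 <= bform (resolvent Phi1 - resolvent Phi2) x x).
rewrite bformBm (resolvent_bform_eq x sPhi2 K2_pd) /=.
set y := invmx _ *m _.
have := resolvent_bform_ge x y sPhi1 K1_pd.
have : 0 <= bform (Phi1 - Phi2) (x + L *m y) (x + L *m y) := proj2 Phi21 _.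
rewrite bformBm; lra.
Qed.

End SchurComplement.

Theorem lemma2 (R : realType) (n m p N : nat)
  (A : 'M[R]_n) (B : 'M[R]_(n, m)) (C : 'M[R]_(p, n)) (D : 'M[R]_p)
  (Phi1 Phi2 : 'M[R]_(N * n)) :
  (0 < n)%N -> (0 < m)%N -> (0 < p)%N -> (0 < N)%N ->
  pdmx (D *m D^T) ->
  Phi1^T = Phi1 -> Phi2^T = Phi2 ->
  loewner_le 0 Phi2 -> loewner_le Phi2 Phi1 ->
  loewner_lt_bar Phi1 (phitN N A B C D) ->
  loewner_le (OmegaPhi A B C D Phi1) (OmegaPhi A B C D Phi2) /\
  loewner_le (WPhi A B C D Phi2) (WPhi A B C D Phi1).
Proof.
move=> n_gt0 _ _ N_gt0 _ sPhi1 sPhi2 Phi2_ge0 Phi21 Phi1_lt.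
have P_pd : pdmx (PN N A B C D).
  by apply: pdmx_1_add_congr; apply/psdmx_inv/psdmx_gram.
have M_sym : (MN N A B C D)^T = MN N A B C D.
  have Pi_sym := proj1 (psdmx_inv (pdmx_psdmx P_pd)).
  by have := trmx_congr (LN N A B)^T Pi_sym; rewrite trmxK.
have Phi1_psd : psdmx Phi1.
  by have := loewner_le_trans Phi2_ge0 Phi21; rewrite /loewner_le subr0.
have Nn_gt0 : (0 < N * n)%N by rewrite muln_gt0 N_gt0.
have [lam [lam_ge0 M_le Phi1_lam]] :=
  loewner_lt_bar_inv_lambda1 Nn_gt0 M_sym Phi1_psd Phi1_lt.
have K1_pd := pdmx_schur_gap P_pd sPhi1 lam_ge0 M_le Phi1_lam.
split.
- rewrite /loewner_le /OmegaPhi /SinvPhi !mulmxN !mulNmx opprD opprK addrACA.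
  rewrite subrr add0r addrC -mulmxBl -mulmxBr.
  exact/psdmx_congr/resolvent_le.
- rewrite /loewner_le /WPhi /QPhi -mulmxBl -mulmxBr -{1}(trmxK (RN N A B)).
  exact/psdmx_congr/loewner_le_invmx/schur_gap_le.
Qed.
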